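(* Let $T$ be a $C_{p^rq^s}$-transfer system with exactly two connected components. Then the connected component of $(0,0)$ is either $V_\ell$ for some $0\le\ell<r$, or $H_k$ for some $0\le k<s$, or $L_{(\ell,k)}$ for some $0\le \ell<r$ and $0\le k<s$.
   Context: $p,q$ are distinct primes and $r,s\ge 0$ integers. The subgroups of $C_{p^rq^s}$ are identified with grid points $(i,j)$, $0\le i\le r$, $0\le j\le s$, where $(i,j)$ stands for $C_{p^iq^j}$. A $C_{p^rq^s}$-transfer system is a partial order $\to$ on these vertices such that: $(i_1,j_1)\to(i_2,j_2)$ implies $i_1\le i_2$, $j_1\le j_2$; it is reflexive and transitive; and $(i_1,j_1)\to(i_2,j_2)$ implies $(\min\{i_1,a\},\min\{j_1,b\})\to(\min\{i_2,a\},\min\{j_2,b\})$ for every vertex $(a,b)$. Connected components are those of the underlying undirected graph. Define $V_\ell=\{(i,j): 0\le i\le \ell,\ 0\le j\le s\}$ (for $\ell<r$), $H_k=\{(i,j): 0\le i\le r,\ 0\le j\le k\}$ (for $k<s$), and $L_{(\ell,k)}=V_\ell\cup H_k$. *)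

From mathcomp Require Import all_boot.
Set Implicit Arguments. Unset Strict Implicit. Unset Printing Implicit Defensive.

(* Vertex (i,j) with 0 <= i <= r, 0 <= j <= s stands for the subgroup C_{p^i q^j}. *)
Definition vert (r s : nat) := ('I_r.+1 * 'I_s.+1)%type.

Definition ord_min n (i j : 'I_n) : 'I_n := if (i <= j)%N then i else j.

Definition vmin r s (x a : vert r s) : vert r s :=
  (ord_min x.1 a.1, ord_min x.2 a.2).

Definition vle r s (x y : vert r s) : bool := (x.1 <= y.1)%N && (x.2 <= y.2)%N.

(* A C_{p^r q^s}-transfer system: a partial order refining the grid order,
   closed under restriction (meets with arbitrary vertices). *)
Definition transfer_system r s (T : rel (vert r s)) : Prop :=
  [/\ (forall x, T x x),
      (forall x y z, T x y -> T y z -> T x z),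
      (forall x y, T x y -> T y x -> x = y),
      (forall x y, T x y -> vle x y) &
      (forall x y a, T x y -> T (vmin x a) (vmin y a))].

Definition undirected r s (T : rel (vert r s)) : rel (vert r s) :=
  fun x y => T x y || T y x.

Definition component r s (T : rel (vert r s)) (x : vert r s) : {set vert r s} :=
  [set y | connect (undirected T) x y].

Definition components r s (T : rel (vert r s)) : {set {set vert r s}} :=
  [set component T x | x : vert r s].

Definition origin r s : vert r s := (ord0, ord0).

Definition V_set r s (l : nat) : {set vert r s} := [set x : vert r s | (x.1 <= l)%N].
Definition H_set r s (k : nat) : {set vert r s} := [set x : vert r s | (x.2 <= k)%N].
Definition L_set r s (l k : nat) : {set vert r s} := V_set r s l :|: H_set r s k.

(* Only closure under restriction matters.  Restricting along [vmin _ a] maps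
   paths of the undirected graph to paths, so the component of the origin is
   down-closed, and the other component [D] is closed under meets:
   [vmin m y] is joined to [vmin y y = y] whenever [m] and [y] are.  For [m] of
   least coordinate sum in [D] this forces [vmin m y = m], so [D] is the
   up-set of [m <> (0,0)]; its complement is [V], [H] or [L] according to
   which coordinates of [m] vanish. *)
From mathcomp Require Import all_boot.
From mathcomp Require Import zify.

Lemma vmin_idPr {r s} (x y : vert r s) : vle y x -> vmin x y = y.
Proof.
case: x y => [a b] [c d] /andP /= [le_ca le_db]; rewrite /vmin /ord_min /=.
by congr pair; case: leqP => // h; apply: val_inj => /=; lia.
Qed.

Lemma vminxx {r s} (x : vert r s) : vmin x x = x.
Proof. by case: x => a b; rewrite /vmin /ord_min /= !leqnn. Qed.

Lemma vmin_origin {r s} (a : vert r s) : vmin (origin r s) a = origin r s.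
Proof. by []. Qed.

Lemma vle_vmin_sum {r s} (x y : vert r s) :
  (x.1 + x.2 <= (vmin x y).1 + (vmin x y).2)%N -> vle x y.
Proof.
case: x y => [a b] [c d]; rewrite /vle /vmin /ord_min /=.
by case: (leqP a c); case: (leqP b d) => /= *; lia.
Qed.

Lemma not_vle_classification {r s} (m : vert r s) : m != origin r s ->
  let C := [set z : vert r s | ~~ vle m z] in
  (exists2 l, (l < r)%N & C = V_set r s l) \/
  (exists2 k, (k < s)%N & C = H_set r s k) \/
  (exists l k, [/\ (l < r)%N, (k < s)%N & C = L_set r s l k]).
Proof.
case: m => [[a ha] [b hb]] m_neq0 C.
have {m_neq0} a_or_b : (0 < a) || (0 < b).
  apply: contraR m_neq0; rewrite negb_or -!eqn0Ngt => /andP[/eqP a0 /eqP b0].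
  by apply/eqP; congr pair; apply: val_inj.
have C_by_coords (P : nat -> nat -> bool) (S : {set vert r s}) :
    (forall z : vert r s, (z \in S) = P z.1 z.2) ->
    (forall x y, ~~ ((a <= x) && (b <= y)) = P x y)%N -> C = S.
  by move=> HS HP; apply/setP => z; rewrite HS inE /vle HP.
case: (posnP a) => [a0 | a_gt0]; last case: (posnP b) => [b0 | b_gt0].
- right; left; exists b.-1; first lia.
  by apply: (C_by_coords (fun _ y => y <= b.-1)%N) => [z|x y]; rewrite ?inE //; lia.
- left; exists a.-1; first lia.
  by apply: (C_by_coords (fun x _ => x <= a.-1)%N) => [z|x y]; rewrite ?inE //; lia.
- right; right; exists a.-1, b.-1; split; try lia.
  apply: (C_by_coords (fun x y => (x <= a.-1) || (y <= b.-1))%N) => [z|x y].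
    by rewrite !inE.
  lia.
Qed.

Section UndirectedComponents.
Context {r s : nat} (T : rel (vert r s)).
Local Notation E := (undirected T).

Lemma undirected_sym : symmetric E.
Proof. by move=> x y; rewrite /undirected orbC. Qed.

Lemma connect_undirectedC x y : connect E x y = connect E y x.
Proof. exact: (sym_connect_sym undirected_sym). Qed.

Lemma component_eq x y : connect E x y -> component T x = component T y.
Proof.
move=> Exy; apply/setP => z; rewrite !inE; apply/idP/idP; last exact: connect_trans.
by apply: connect_trans; rewrite connect_undirectedC.
Qed.

Lemma components_card1 x : (forall y, y \in component T x) -> components T = [set component T x].
Proof.
move=> Cx; apply/setP => X; rewrite inE; apply/imsetP/eqP => [[y _ ->] | ->]; last by exists x.
by apply: component_eq; rewrite connect_undirectedC -(in_set (connect E x)) Cx.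
Qed.

Section TwoComponents.
Hypothesis card_components : #|components T| = 2.

Lemma exists_notin_component x : exists w, w \notin component T x.
Proof.
apply/existsP; apply: contraT; rewrite negb_exists => /forallP Cx.
by have := card_components; rewrite (components_card1 x (fun y => negbNE (Cx y))) cards1.
Qed.

Lemma connect_notin_component {x y z} :
  y \notin component T x -> z \notin component T x -> connect E y z.
Proof.
have Cx : component T x \in components T by apply/imsetP; exists x.
have := cardsD1 (component T x) (components T); rewrite Cx card_components.
move=> [] /esym /eqP /cards1P [X DX].
have compX w : w \notin component T x -> component T w = X.
  move=> Cw; apply/set1P; rewrite -DX !inE; apply/andP; split; last exact: imset_f.
  by apply: contraNneq Cw => <-; rewrite inE connect0.
move=> Cy Cz; suff : z \in component T y by rewrite inE.
by rewrite compX // -(compX _ Cz) inE connect0.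
Qed.

End TwoComponents.
End UndirectedComponents.

Section Restriction.
Context {r s : nat} {T : rel (vert r s)}.
Hypothesis T_vmin : forall x y a, T x y -> T (vmin x a) (vmin y a).
Local Notation E := (undirected T).
Local Notation C0 := (component T (origin r s)).

Lemma connect_vmin {x y} a : connect E x y -> connect E (vmin x a) (vmin y a).
Proof.
case/connectP => path_xy; elim: path_xy x => [|z path_xy IH] x /=; first by move=> _ ->.
case/andP => Exz /IH{}IH /IH; apply: connect_trans; apply: connect1.
by case/orP: Exz => /T_vmin Tz; rewrite /undirected Tz ?orbT.
Qed.

Lemma component_origin_down {y z} : y \in C0 -> vle z y -> z \in C0.
Proof.
rewrite !inE => /(connect_vmin z) + /vmin_idPr zy_z.
by rewrite vmin_origin zy_z.
Qed.

Lemma component_origin_not_above :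
  #|components T| = 2 -> exists2 m, m != origin r s & C0 = [set z | ~~ vle m z].
Proof.
move=> card_components.
have [w C0w] := exists_notin_component T card_components (origin r s).
have [m C0m m_min] := @arg_minnP _ w (fun x => x \notin C0) (fun x => x.1 + x.2)%N C0w.
have m_le y : y \notin C0 -> vle m y.
  move=> C0y; apply/vle_vmin_sum/m_min.
  have Emy := connect_notin_component T card_components C0m C0y.
  apply: contra C0y => C0my; rewrite !inE in C0my *.
  by apply: connect_trans C0my _; rewrite -{2}(vminxx y) connect_vmin.
exists m.
  by apply: contraNneq C0m => ->; rewrite inE connect0.
apply/setP => z; rewrite [RHS]inE; apply/idP/idP => [C0z | m_z].
  exact: contra (component_origin_down C0z) C0m.
by apply: contraR m_z; exact: m_le.
Qed.

End Restriction.

Theorem mainTheorem13 (p q r s : nat) (T : rel (vert r s)) :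
  prime p -> prime q -> p <> q ->
  transfer_system T ->
  #|components T| = 2 ->
  (exists2 l, (l < r)%N & component T (origin r s) = V_set r s l) \/
  (exists2 k, (k < s)%N & component T (origin r s) = H_set r s k) \/
  (exists l k, [/\ (l < r)%N, (k < s)%N & component T (origin r s) = L_set r s l k]).
Proof.
move=> _ _ _ [_ _ _ _ T_vmin] card_components.
have [m m_neq0 ->] := component_origin_not_above T_vmin card_components.
exact: not_vle_classification.
Qed.
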